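(* Let $A>0$. For all $C_0,C_1\in B_i(S^1,\mathbb R^2)$, $$\sqrt{\ell(C_1)}-\sqrt{\ell(C_0)}\le\frac{1}{2\sqrt A}\,\mathrm{dist}^{B_i}_{G^A}(C_0,C_1).$$
   Context: $S^1=\mathbb R/2\pi\mathbb Z$, $\mathbb R^2\cong\mathbb C$. $\mathrm{Imm}=\mathrm{Imm}(S^1,\mathbb R^2)$ is the space of smooth immersions, $\mathrm{Diff}(S^1)$ acts on it by reparametrization, $B_i(S^1,\mathbb R^2)=\mathrm{Imm}/\mathrm{Diff}(S^1)$ with projection $\pi$. For $c\in\mathrm{Imm}$: $\ell(c)=\int_{S^1}|c_\theta|\,d\theta$ (invariant, so defined on $B_i$), $n_c=ic_\theta/|c_\theta|$, $\kappa_c=\det(c_\theta,c_{\theta\theta})/|c_\theta|^3$. For a smooth path $c:[0,1]\times S^1\to\mathbb R^2$ with each $c(t,\cdot)\in\mathrm{Imm}$, and $A\ge0$, $$L^{hor}_{G^A}(c)=\int_0^1\Big(\int_{S^1}(1+A\kappa_{c(t)}^2)\langle c_t,n_{c(t)}\rangle^2|c_\theta|\,d\theta\Big)^{1/2}dt,$$ and $\mathrm{dist}^{B_i}_{G^A}(C_0,C_1)$ is the infimum of $L^{hor}_{G^A}(c)$ over all such paths with $\pi(c(0,\cdot))=C_0$, $\pi(c(1,\cdot))=C_1$. *)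

From Stdlib Require Import Reals.
From Coquelicot Require Import Coquelicot.
Open Scope R_scope.

(* R^2 = C is represented as R * R. A function on S^1 = R/2piZ is a 2pi-periodic
   function on R. *)

Definition smooth1 (f : R -> R) : Prop := forall (n : nat) (x : R), ex_derive_n f n x.

Definition pdt (f : R -> R -> R) (t th : R) : R := Derive (fun s => f s th) t.
Definition pdth (f : R -> R -> R) (t th : R) : R := Derive (fun s => f t s) th.

Fixpoint C2k (k : nat) (f : R -> R -> R) : Prop :=
  match k with
  | O => forall t th, continuous (fun p : R * R => f (fst p) (snd p)) (t, th)
  | S m =>
      (forall t th, continuous (fun p : R * R => f (fst p) (snd p)) (t, th)) /\
      (forall t th, ex_derive (fun s => f s th) t) /\
      (forall t th, ex_derive (fun s => f t s) th) /\
      C2k m (pdt f) /\ C2k m (pdth f)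
  end.

Definition smooth2 (f : R -> R -> R) : Prop := forall k, C2k k f.

Definition is_imm (c : R -> R * R) : Prop :=
  smooth1 (fun th => fst (c th)) /\ smooth1 (fun th => snd (c th)) /\
  (forall th, c (th + 2 * PI) = c th) /\
  (forall th, (Derive (fun s => fst (c s)) th, Derive (fun s => snd (c s)) th) <> (0, 0)).

Definition ell (c : R -> R * R) : R :=
  RInt (fun th => sqrt (Derive (fun s => fst (c s)) th ^ 2
                        + Derive (fun s => snd (c s)) th ^ 2)) 0 (2 * PI).

(** Lifts to R of elements of Diff(S^1) (orientation preserving or reversing). *)
Definition is_diffS1 (phi : R -> R) : Prop :=
  smooth1 phi /\
  ((forall th, phi (th + 2 * PI) = phi th + 2 * PI) \/
   (forall th, phi (th + 2 * PI) = phi th - 2 * PI)) /\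
  (forall th, Derive phi th <> 0).

(** pi(g) = pi(c0) in B_i: g is a reparametrization of c0. *)
Definition same_orbit (c0 g : R -> R * R) : Prop :=
  exists phi, is_diffS1 phi /\ forall th, g th = c0 (phi th).

(** Paths of immersions c : [0,1] x S^1 -> R^2 (smooth maps on R x S^1;
    every smooth map on [0,1] x S^1 extends smoothly, and only t in [0,1] matters). *)
Definition cx (c : R -> R -> R * R) : R -> R -> R := fun t th => fst (c t th).
Definition cy (c : R -> R -> R * R) : R -> R -> R := fun t th => snd (c t th).

Definition speed (c : R -> R -> R * R) (t th : R) : R :=
  sqrt (pdth (cx c) t th ^ 2 + pdth (cy c) t th ^ 2).

Definition is_path (c : R -> R -> R * R) : Prop :=
  smooth2 (cx c) /\ smooth2 (cy c) /\
  (forall t th, c t (th + 2 * PI) = c t th) /\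
  (forall t th, 0 <= t <= 1 -> (pdth (cx c) t th, pdth (cy c) t th) <> (0, 0)).

Definition kappa (c : R -> R -> R * R) (t th : R) : R :=
  (pdth (cx c) t th * pdth (pdth (cy c)) t th
   - pdth (cy c) t th * pdth (pdth (cx c)) t th) / speed c t th ^ 3.

(** <c_t, n_c> with n_c = i c_theta / |c_theta| = (-y_theta, x_theta)/|c_theta| *)
Definition normal_vel (c : R -> R -> R * R) (t th : R) : R :=
  (- pdt (cx c) t th * pdth (cy c) t th + pdt (cy c) t th * pdth (cx c) t th)
  / speed c t th.

Definition Lhor (A : R) (c : R -> R -> R * R) : R :=
  RInt (fun t => sqrt (RInt (fun th =>
          (1 + A * kappa c t th ^ 2) * normal_vel c t th ^ 2 * speed c t th)
        0 (2 * PI))) 0 1.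

(** dist^{B_i}_{G^A}(pi c0, pi c1): infimum (in Rbar; +oo for the empty set). *)
Definition distBi (A : R) (c0 c1 : R -> R * R) : Rbar :=
  Glb_Rbar (fun L => exists c, is_path c /\ same_orbit c0 (c 0) /\
                               same_orbit c1 (c 1) /\ L = Lhor A c).

(* Along a path c(t) of immersions, integrating by parts around the circle gives
   L'(t) = -int kappa <c_t, n> |c_theta| dtheta for the length L(t).  Cauchy-Schwarz with
   weight |c_theta| bounds this by (int kappa^2 <c_t, n>^2 |c_theta|)^(1/2) L^(1/2), which is at
   most (G^A(c_t, c_t) / A)^(1/2) L^(1/2); hence (sqrt L)' <= |c_t|_{G^A} / (2 sqrt A).  Integrating
   over [0, 1] bounds sqrt L(1) - sqrt L(0) by the horizontal length over 2 sqrt A, and since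
   the length is invariant under reparametrization this holds for every path joining the two
   orbits, hence for the infimum. *)

From Stdlib Require Import Reals Lra Psatz.
From Coquelicot Require Import Coquelicot.
Open Scope R_scope.

Lemma ex_RInt_of_continuous (f : R -> R) a b :
  (forall x, continuous f x) -> ex_RInt f a b.
Proof. intro Hf; apply (@ex_RInt_continuous R_CompleteNormedModule); auto. Qed.

Lemma RInt_Rplus (f g : R -> R) a b : ex_RInt f a b -> ex_RInt g a b ->
  RInt (fun x => f x + g x) a b = RInt f a b + RInt g a b.
Proof. intros; apply (RInt_plus f g a b); auto. Qed.

Lemma RInt_Rminus (f g : R -> R) a b : ex_RInt f a b -> ex_RInt g a b ->
  RInt (fun x => f x - g x) a b = RInt f a b - RInt g a b.
Proof. intros; apply (RInt_minus f g a b); auto. Qed.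

Lemma RInt_Rmult_l (f : R -> R) k a b : ex_RInt f a b ->
  RInt (fun x => k * f x) a b = k * RInt f a b.
Proof. intros; apply (RInt_scal f a b k); auto. Qed.

Lemma continuous_pow2 (f : R -> R) x : continuous f x -> continuous (fun y => f y ^ 2) x.
Proof.
  intro Hf. apply (continuous_mult f (fun y => f y ^ 1)); auto.
  apply (continuous_mult f (fun _ => 1)); auto using continuous_const.
Qed.

Lemma RInt_periodic_shift (F : R -> R) T u :
  (forall x, continuous F x) -> (forall x, F (x + T) = F x) ->
  RInt F u (u + T) = RInt F 0 T.
Proof.
  intros cF pF.
  assert (exF : forall a b, ex_RInt F a b) by (intros; apply ex_RInt_of_continuous; auto).
  assert (Hshift : RInt F T (u + T) = RInt F 0 u).
  { pose proof (RInt_comp_lin (V := R_CompleteNormedModule) F 1 T 0 u) as E.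
    rewrite Rmult_0_r, Rmult_1_l, Rplus_0_l in E.
    rewrite <- E by apply exF.
    apply RInt_ext; intros y _. change (1 * F (1 * y + T) = F y).
    rewrite !Rmult_1_l; apply pF. }
  rewrite <- (RInt_Chasles F u T (u + T)), Hshift, Rplus_comm by auto.
  apply (RInt_Chasles F 0 u T); auto.
Qed.

Lemma Derive_periodic (f : R -> R) T x :
  ex_derive f (x + T) -> (forall y, f (y + T) = f y) -> Derive f (x + T) = Derive f x.
Proof.
  intros Hd Hp. rewrite <- (Derive_ext _ _ x Hp).
  rewrite (Derive_comp f (fun y => y + T)); [| exact Hd | auto_derive; auto].
  replace (Derive (fun y => y + T) x) with 1
    by (symmetry; apply is_derive_unique; auto_derive; auto; ring).
  ring.
Qed.

Lemma continuous_nonzero_sign (f : R -> R) :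
  (forall x, continuous f x) -> (forall x, f x <> 0) ->
  (forall x, 0 < f x) \/ (forall x, f x < 0).
Proof.
  intros cf nz.
  assert (Hivt : forall x, f 0 * f x > 0).
  { intro x. destruct (Rlt_or_le 0 (f 0 * f x)) as [|Hle]; [lra|exfalso].
    destruct (IVT_gen_consistent f 0 x 0 cf) as [z [_ Hz]]; [|exact (nz z Hz)].
    pose proof (nz 0); pose proof (nz x).
    unfold Rmin, Rmax; destruct Rle_dec; split; nra. }
  destruct (Rlt_or_le 0 (f 0)) as [H0|H0]; [left|right]; intro x; specialize (Hivt x).
  - nra.
  - pose proof (nz 0); nra.
Qed.

Lemma RInt_abs_Derive_comp_periodic (F phi : R -> R) T : 0 < T ->
  (forall x, continuous F x) -> (forall x, F (x + T) = F x) ->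
  (forall x, ex_derive phi x) -> (forall x, continuous (Derive phi) x) ->
  (forall x, Derive phi x <> 0) ->
  (forall x, phi (x + T) = phi x + T) \/ (forall x, phi (x + T) = phi x - T) ->
  RInt (fun x => Rabs (Derive phi x) * F (phi x)) 0 T = RInt F 0 T.
Proof.
  intros HT cF pF dphi cdphi nz hper.
  assert (Hsubst : RInt (fun x => Derive phi x * F (phi x)) 0 T = RInt F (phi 0) (phi T)).
  { apply (RInt_comp (V := R_CompleteNormedModule) F phi (Derive phi)); intros; auto.
    split; auto. apply Derive_correct; auto. }
  destruct (MVT_gen phi 0 T (Derive phi)) as [xi [_ Hmvt]].
  { intros; apply Derive_correct; auto. }
  { intros; apply continuity_pt_filterlim, (ex_derive_continuous phi); auto. }
  assert (HphiT : phi T = phi 0 + T \/ phi T = phi 0 - T).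
  { rewrite <- (Rplus_0_l T) at 1 3. destruct hper as [Hp|Hp]; [left|right]; apply Hp. }
  destruct (continuous_nonzero_sign (Derive phi) cdphi nz) as [Hpos|Hneg].
  - assert (E : phi T = phi 0 + T) by (specialize (Hpos xi); destruct HphiT; nra).
    rewrite (RInt_ext _ (fun x => Derive phi x * F (phi x)))
      by (intros; rewrite Rabs_pos_eq; auto; apply Rlt_le, Hpos).
    rewrite Hsubst, E. apply RInt_periodic_shift; auto.
  - assert (E : phi T = phi 0 - T) by (specialize (Hneg xi); destruct HphiT; nra).
    rewrite (RInt_ext _ (fun x => -1 * (Derive phi x * F (phi x))))
      by (intros; rewrite Rabs_left by auto; simpl; ring).
    rewrite RInt_Rmult_l, Hsubst, E.
    + rewrite <- (RInt_periodic_shift F T (phi 0 - T)), Rplus_comm, Rplus_minus by auto.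
      rewrite <- (opp_RInt_swap (V := R_CompleteNormedModule))
        by (apply ex_RInt_of_continuous; auto).
      unfold opp; simpl; ring.
    + apply ex_RInt_of_continuous; intro x.
      apply (continuous_mult (Derive phi) (fun x => F (phi x))); auto.
      apply (continuous_comp phi F); auto. apply (ex_derive_continuous phi); auto.
Qed.

Lemma le_sqrt_mul_of_am_gm x a b : 0 <= a -> 0 <= b ->
  (forall l, 0 < l -> x <= (l * a + b / l) / 2) -> x <= sqrt (a * b).
Proof.
  intros Ha Hb H.
  destruct (Rle_or_lt x 0) as [Hx|Hx]; [pose proof (sqrt_pos (a * b)); lra|].
  destruct (Req_dec a 0) as [->|Ha'].
  - assert (Hl : 0 < (b + 1) / x) by (apply Rdiv_lt_0_compat; lra).
    specialize (H _ Hl).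
    replace (((b + 1) / x * 0 + b / ((b + 1) / x)) / 2) with (x * (b / (2 * (b + 1)))) in H
      by (field; lra).
    assert (b / (2 * (b + 1)) < 1) by (apply Rmult_lt_reg_r with (2 * (b + 1)); field_simplify; lra).
    nra.
  - specialize (H (x / a) ltac:(apply Rdiv_lt_0_compat; lra)).
    replace ((x / a * a + b / (x / a)) / 2) with ((x + a * b / x) / 2) in H by (field; lra).
    rewrite <- (sqrt_pow2 x) by lra. apply sqrt_le_1_alt.
    apply Rmult_le_reg_r with (/ x); [apply Rinv_0_lt_compat; lra|].
    replace (x ^ 2 * / x) with x by (field; lra). lra.
Qed.

Lemma RInt_weighted_Cauchy_Schwarz (f w : R -> R) a b : a <= b ->
  (forall x, continuous f x) -> (forall x, continuous w x) -> (forall x, 0 <= w x) ->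
  RInt (fun x => f x * w x) a b <= sqrt (RInt (fun x => f x ^ 2 * w x) a b * RInt w a b).
Proof.
  intros Hab cf cw w_ge0.
  assert (cf2 : forall x, continuous (fun y => f y ^ 2 * w y) x)
    by (intro; apply (continuous_mult (fun y => f y ^ 2) w); auto using continuous_pow2).
  apply le_sqrt_mul_of_am_gm.
  - apply RInt_ge_0; auto using ex_RInt_of_continuous.
    intros; apply Rmult_le_pos; auto using pow2_ge_0.
  - apply RInt_ge_0; auto using ex_RInt_of_continuous.
  - intros l Hl.
    assert (e2 : ex_RInt (fun x => f x ^ 2 * w x) a b) by (apply ex_RInt_of_continuous; auto).
    assert (ew : ex_RInt w a b) by (apply ex_RInt_of_continuous; auto).
    replace ((l * RInt (fun x => f x ^ 2 * w x) a b + RInt w a b / l) / 2)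
      with (RInt (fun x => l / 2 * (f x ^ 2 * w x) + / (2 * l) * w x) a b).
    2: { rewrite RInt_Rplus, !RInt_Rmult_l by
           (auto; apply (ex_RInt_scal (V := R_NormedModule)); auto).
         assert (E : forall I W, l / 2 * I + / (2 * l) * W = (l * I + W / l) / 2)
           by (intros; field; lra).
         apply E. }
    apply RInt_le; auto.
    + apply ex_RInt_of_continuous; intro x. apply (continuous_mult f w); auto.
    + apply (ex_RInt_plus (V := R_NormedModule)); apply (ex_RInt_scal (V := R_NormedModule)); auto.
    + intros x _. pose proof (w_ge0 x).
      apply Rmult_le_reg_l with (2 * l); [lra|].
      replace (2 * l * (l / 2 * (f x ^ 2 * w x) + / (2 * l) * w x))
        with (((l * f x) ^ 2 + 1) * w x) by (field; lra).
      assert (0 <= (l * f x - 1) ^ 2 * w x) by (apply Rmult_le_pos; auto using pow2_ge_0).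
      nra.
Qed.

Lemma sub_le_RInt_of_derive_le (F dF g : R -> R) a b : a <= b ->
  (forall x, a < x < b -> is_derive F x (dF x)) ->
  (forall x, a <= x <= b -> continuous F x) ->
  (forall x, continuous g x) ->
  (forall x, a <= x <= b -> dF x <= g x) ->
  F b - F a <= RInt g a b.
Proof.
  intros Hab dF_F cF cg HdF.
  pose (G := fun x => RInt g a x).
  assert (dG : forall x, is_derive G x (g x)).
  { intro x. apply (is_derive_RInt g G a x); auto.
    apply filter_forall; intro y.
    apply (RInt_correct (V := R_CompleteNormedModule)), ex_RInt_of_continuous; auto. }
  destruct (MVT_gen (fun x => F x - G x) a b (fun x => dF x - g x)) as [xi [Hxi Hmvt]];
    rewrite ?Rmin_left, ?Rmax_right in * by lra.
  - intros x Hx. apply (is_derive_minus F G); auto.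
  - intros x Hx. apply continuity_pt_filterlim, (continuous_minus F G); auto.
    apply ex_derive_continuous; eexists; apply dG.
  - assert (HGa : G a = 0) by exact (RInt_point a g).
    specialize (HdF xi Hxi). fold (G b). nra.
Qed.

Lemma Rbar_le_mult_Glb_Rbar (k x : R) (E : R -> Prop) : 0 < k ->
  (forall L, E L -> x <= k * L) -> Rbar_le x (Rbar_mult k (Glb_Rbar E)).
Proof.
  intros Hk HE.
  assert (Hglb : Rbar_le (x / k) (Glb_Rbar E)).
  { apply Glb_Rbar_correct; intros L HL; simpl.
    apply Rmult_le_reg_l with k; [lra|].
    replace (k * (x / k)) with x by (field; lra). auto. }
  destruct (Glb_Rbar E) as [y| |]; simpl in *; try easy.
  - apply Rmult_le_reg_r with (/ k); [apply Rinv_0_lt_compat; lra|].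
    replace (k * y * / k) with y by (field; lra). exact Hglb.
  - destruct (Rle_dec 0 k); [| lra].
    destruct (Rle_lt_or_eq_dec 0 k r); simpl; auto; lra.
Qed.

Lemma continuity_2d_pt_continuous_snd (F : R -> R -> R) t th :
  continuity_2d_pt F t th -> continuous (F t) th.
Proof.
  intro H. apply continuity_pt_filterlim. intros eps Heps.
  destruct (H (mkposreal eps Heps)) as [d Hd].
  exists d; split; [apply cond_pos|]. intros x [_ Hx].
  apply Hd; [rewrite Rminus_diag, Rabs_R0; apply cond_pos | exact Hx].
Qed.

Lemma continuity_2d_pt_pow (f : R -> R -> R) n t th :
  continuity_2d_pt f t th -> continuity_2d_pt (fun u v => f u v ^ n) t th.
Proof.
  intro H. induction n as [|n IH].
  - exact (continuity_2d_pt_const t th 1).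
  - exact (continuity_2d_pt_mult f _ t th H IH).
Qed.

Lemma continuity_2d_pt_div (f g : R -> R -> R) t th :
  continuity_2d_pt f t th -> continuity_2d_pt g t th -> g t th <> 0 ->
  continuity_2d_pt (fun u v => f u v / g u v) t th.
Proof. intros; apply continuity_2d_pt_mult, continuity_2d_pt_inv; auto. Qed.

Lemma continuous_RInt_param (F : R -> R -> R) a b t0 : a <= b ->
  (forall t th, continuity_2d_pt F t th) -> continuous (fun t => RInt (F t) a b) t0.
Proof.
  intros hab H.
  assert (Hex : forall t, ex_RInt (F t) a b).
  { intro t; apply ex_RInt_of_continuous; intro; apply continuity_2d_pt_continuous_snd, H. }
  apply continuity_pt_filterlim. intros eps Heps.
  assert (He' : 0 < eps / (b - a + 1)) by (apply Rdiv_lt_0_compat; lra).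
  destruct (uniform_continuity_2d_1d' F a b t0 (fun x _ => H t0 x) (mkposreal _ He'))
    as [d Hd].
  exists d; split; [apply cond_pos|]. intros t [_ Ht]. simpl in Ht |- *. unfold R_dist in *.
  apply Rabs_lt_between' in Ht.
  rewrite <- RInt_Rminus by auto.
  eapply Rle_lt_trans.
  - apply (abs_RInt_le_const _ a b (eps / (b - a + 1))); auto.
    + apply (ex_RInt_minus (V := R_NormedModule)); auto.
    + intros th Hth. left. apply (Hd th t0 th t); auto; try lra.
      rewrite Rminus_diag, Rabs_R0; apply cond_pos.
  - apply Rmult_lt_reg_r with (/ eps); [apply Rinv_0_lt_compat; lra|].
    replace (eps / (b - a + 1) * (b - a) * / eps) with ((b - a) / (b - a + 1)) by (field; lra).
    rewrite Rinv_r by lra. apply Rmult_lt_reg_r with (b - a + 1); [lra|].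
    field_simplify; lra.
Qed.

Definition clamp01 t := Rmax 0 (Rmin 1 t).

Lemma clamp01_mem t : 0 <= clamp01 t <= 1.
Proof. unfold clamp01, Rmax, Rmin; repeat destruct Rle_dec; lra. Qed.

Lemma clamp01_id t : 0 <= t <= 1 -> clamp01 t = t.
Proof. intro; unfold clamp01, Rmax, Rmin; repeat destruct Rle_dec; lra. Qed.

Lemma clamp01_lipschitz u t : Rabs (clamp01 u - clamp01 t) <= Rabs (u - t).
Proof. unfold clamp01, Rmax, Rmin, Rabs; repeat destruct Rle_dec; repeat destruct Rcase_abs; lra. Qed.

Lemma continuity_2d_pt_clamp01 (F : R -> R -> R) t th :
  (forall u v, 0 <= u <= 1 -> continuity_2d_pt F u v) ->
  continuity_2d_pt (fun u v => F (clamp01 u) v) t th.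
Proof.
  intros H eps. destruct (H (clamp01 t) th (clamp01_mem t) eps) as [d Hd].
  exists d. intros u v Hu Hv. apply Hd; auto.
  eapply Rle_lt_trans; [apply clamp01_lipschitz | exact Hu].
Qed.

Lemma smooth2_continuity_2d_pt f t th : smooth2 f -> continuity_2d_pt f t th.
Proof. intro H; apply continuity_2d_pt_filterlim, (H 0%nat). Qed.

Lemma smooth2_ex_derive_t f t th : smooth2 f -> ex_derive (fun s => f s th) t.
Proof. intro H; destruct (H 1%nat) as (_ & Ht & _); apply Ht. Qed.

Lemma smooth2_ex_derive_th f t th : smooth2 f -> ex_derive (f t) th.
Proof. intro H; destruct (H 1%nat) as (_ & _ & Hth & _); apply Hth. Qed.

Lemma smooth2_pdt f : smooth2 f -> smooth2 (pdt f).
Proof. intros H k; destruct (H (S k)) as (_ & _ & _ & Hk & _); exact Hk. Qed.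

Lemma smooth2_pdth f : smooth2 f -> smooth2 (pdth f).
Proof. intros H k; destruct (H (S k)) as (_ & _ & _ & _ & Hk); exact Hk. Qed.

Lemma pdt_pdth f t th : smooth2 f -> pdt (pdth f) t th = pdth (pdt f) t th.
Proof.
  intro H. apply (Schwarz f t th).
  - exists (mkposreal 1 Rlt_0_1). intros u v _ _. repeat split.
    + apply smooth2_ex_derive_t; auto.
    + apply smooth2_ex_derive_th; auto.
    + apply (smooth2_ex_derive_t (pdth f)), smooth2_pdth; auto.
    + apply (smooth2_ex_derive_th (pdt f)), smooth2_pdt; auto.
  - apply (smooth2_continuity_2d_pt (pdt (pdth f))), smooth2_pdt, smooth2_pdth; auto.
  - apply (smooth2_continuity_2d_pt (pdth (pdt f))), smooth2_pdth, smooth2_pdt; auto.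
Qed.

Lemma pdt_periodic F T t th :
  (forall t th, F t (th + T) = F t th) -> pdt F t (th + T) = pdt F t th.
Proof. intro Hp; apply Derive_ext; intro; apply Hp. Qed.

Lemma pdth_periodic F T t th : smooth2 F ->
  (forall t th, F t (th + T) = F t th) -> pdth F t (th + T) = pdth F t th.
Proof. intros HF Hp; apply Derive_periodic; auto using smooth2_ex_derive_th. Qed.

Lemma smooth1_ex_derive f x : smooth1 f -> ex_derive f x.
Proof. intro H; exact (H 1%nat x). Qed.

Lemma smooth1_continuous_Derive f x : smooth1 f -> continuous (Derive f) x.
Proof. intro H; apply (ex_derive_continuous (Derive f)); exact (H 2%nat x). Qed.

Section HorizontalPath.

Variable c : R -> R -> R * R.
Hypotheses (smooth_x : smooth2 (cx c)) (smooth_y : smooth2 (cy c))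
  (periodic_c : forall t th, c t (th + 2 * PI) = c t th)
  (regular_c : forall t th, 0 <= t <= 1 -> (pdth (cx c) t th, pdth (cy c) t th) <> (0, 0)).

Lemma speed_continuity t th : continuity_2d_pt (speed c) t th.
Proof.
  apply continuity_1d_2d_pt_comp with
    (g := fun u v => pdth (cx c) u v ^ 2 + pdth (cy c) u v ^ 2).
  - apply continuity_pt_sqrt. nra.
  - apply continuity_2d_pt_plus; apply continuity_2d_pt_pow;
      apply smooth2_continuity_2d_pt, smooth2_pdth; auto.
Qed.

Lemma speed_sqr_pos t th : 0 <= t <= 1 ->
  0 < pdth (cx c) t th ^ 2 + pdth (cy c) t th ^ 2.
Proof.
  intro Ht. specialize (regular_c t th Ht).
  destruct (Req_dec (pdth (cx c) t th) 0) as [Hx|Hx];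
    destruct (Req_dec (pdth (cy c) t th) 0) as [Hy|Hy].
  - rewrite Hx, Hy in regular_c; easy.
  - pose proof (pow2_gt_0 _ Hy); nra.
  - pose proof (pow2_gt_0 _ Hx); nra.
  - pose proof (pow2_gt_0 _ Hx); nra.
Qed.

Lemma speed_pos t th : 0 <= t <= 1 -> 0 < speed c t th.
Proof. intro; apply sqrt_lt_R0, speed_sqr_pos; auto. Qed.

Lemma speed_nonneg t th : 0 <= speed c t th.
Proof. apply sqrt_pos. Qed.

Lemma speed_sqr t th : speed c t th ^ 2 = pdth (cx c) t th ^ 2 + pdth (cy c) t th ^ 2.
Proof. unfold speed; rewrite <- Rsqr_pow2, Rsqr_sqrt; auto; nra. Qed.

Definition dt_speed t th :=
  (pdth (cx c) t th * pdt (pdth (cx c)) t th + pdth (cy c) t th * pdt (pdth (cy c)) t th)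
  / speed c t th.

Lemma is_derive_speed_t t th : 0 <= t <= 1 ->
  is_derive (fun u => speed c u th) t (dt_speed t th).
Proof.
  intro Ht. pose proof (speed_sqr_pos t th Ht). pose proof (speed_pos t th Ht).
  unfold dt_speed, speed in *. unfold pdt. auto_derive.
  - repeat split; auto; try lra;
      apply (smooth2_ex_derive_t (pdth _)), smooth2_pdth; auto.
  - simpl in *. field. lra.
Qed.

Lemma dt_speed_continuity t th : 0 <= t <= 1 -> continuity_2d_pt dt_speed t th.
Proof.
  intro Ht. apply continuity_2d_pt_div;
    [| apply speed_continuity | apply Rgt_not_eq, speed_pos; auto].
  apply continuity_2d_pt_plus; apply continuity_2d_pt_mult;
    apply smooth2_continuity_2d_pt; repeat apply smooth2_pdt; apply smooth2_pdth; auto.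
Qed.

Lemma is_derive_length t : 0 < t < 1 ->
  is_derive (fun u => RInt (speed c u) 0 (2 * PI)) t (RInt (dt_speed t) 0 (2 * PI)).
Proof.
  intro Ht.
  rewrite (RInt_ext (dt_speed t) (fun th => Derive (fun u => speed c u th) t))
    by (intros; symmetry; apply is_derive_unique, is_derive_speed_t; lra).
  apply (is_derive_RInt_param (speed c)).
  - apply (locally_interval _ t (Finite 0) (Finite 1)); simpl; try lra.
    intros u Hu0 Hu1 th _. eexists; apply is_derive_speed_t; lra.
  - intros th _.
    apply continuity_2d_pt_ext_loc with dt_speed; [| apply dt_speed_continuity; lra].
    assert (Hd : 0 < Rmin t (1 - t)) by (apply Rmin_glb_lt; lra).
    exists (mkposreal _ Hd); simpl; intros u v Hu _.
    apply Rabs_lt_between' in Hu. pose proof (Rmin_l t (1 - t)); pose proof (Rmin_r t (1 - t)).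
    symmetry; apply is_derive_unique, is_derive_speed_t; lra.
  - apply filter_forall; intro u.
    apply ex_RInt_of_continuous; intro; apply continuity_2d_pt_continuous_snd, speed_continuity.
Qed.

Lemma kappa_continuity t th : 0 <= t <= 1 -> continuity_2d_pt (kappa c) t th.
Proof.
  intro Ht. apply continuity_2d_pt_div.
  - apply continuity_2d_pt_minus; apply continuity_2d_pt_mult;
      apply smooth2_continuity_2d_pt; repeat apply smooth2_pdth; auto.
  - apply continuity_2d_pt_pow, speed_continuity.
  - apply pow_nonzero, Rgt_not_eq, speed_pos; auto.
Qed.

Lemma normal_vel_continuity t th : 0 <= t <= 1 -> continuity_2d_pt (normal_vel c) t th.
Proof.
  intro Ht. apply continuity_2d_pt_div;
    [| apply speed_continuity | apply Rgt_not_eq, speed_pos; auto].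
  apply continuity_2d_pt_plus; apply continuity_2d_pt_mult;
    try apply continuity_2d_pt_opp; apply smooth2_continuity_2d_pt;
    try apply smooth2_pdth; try apply smooth2_pdt; auto.
Qed.

Lemma kappa_normal_vel_continuity t th : 0 <= t <= 1 ->
  continuity_2d_pt (fun u v => kappa c u v * normal_vel c u v) t th.
Proof.
  intro; apply continuity_2d_pt_mult; auto using kappa_continuity, normal_vel_continuity.
Qed.

Lemma kappa_normal_vel_speed_continuous t th : 0 <= t <= 1 ->
  continuous (fun th => kappa c t th * normal_vel c t th * speed c t th) th.
Proof.
  intro. apply (continuity_2d_pt_continuous_snd
                  (fun u v => kappa c u v * normal_vel c u v * speed c u v)).
  apply continuity_2d_pt_mult; auto using kappa_normal_vel_continuity, speed_continuity.
Qed.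

Definition tangential_vel t th :=
  (pdt (cx c) t th * pdth (cx c) t th + pdt (cy c) t th * pdth (cy c) t th) / speed c t th.

(* d/dtheta (c_theta / |c_theta|) = kappa |c_theta| n, and d/dtheta c_t = d/dt c_theta. *)
Lemma is_derive_tangential_vel t th : 0 <= t <= 1 ->
  is_derive (tangential_vel t) th
    (dt_speed t th + kappa c t th * normal_vel c t th * speed c t th).
Proof.
  intro Ht. pose proof (speed_sqr_pos t th Ht). pose proof (speed_pos t th Ht).
  pose proof (speed_sqr t th).
  unfold tangential_vel, dt_speed, kappa, normal_vel. unfold speed at 1. auto_derive.
  - repeat split; try apply smooth2_ex_derive_th; try apply smooth2_pdt; try apply smooth2_pdth;
      auto.
    exact (Rgt_not_eq _ _ H0).
  - fold (pdth (pdt (cx c)) t th) (pdth (pdt (cy c)) t th)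
      (pdth (pdth (cx c)) t th) (pdth (pdth (cy c)) t th).
    rewrite !pdt_pdth by auto.
    set (P := pdth (cx c) t th) in *; set (Q := pdth (cy c) t th) in *.
    set (s := speed c t th) in *.
    replace (sqrt (P * (P * 1) + Q * (Q * 1))) with s by (unfold s, speed; f_equal; ring).
    replace (s ^ 3) with (s * (P ^ 2 + Q ^ 2)) by (rewrite <- H1; ring).
    replace (s * s) with (P ^ 2 + Q ^ 2) by (rewrite <- H1; ring).
    field; lra.
Qed.

Lemma cx_periodic t th : cx c t (th + 2 * PI) = cx c t th.
Proof. unfold cx; rewrite periodic_c; auto. Qed.

Lemma cy_periodic t th : cy c t (th + 2 * PI) = cy c t th.
Proof. unfold cy; rewrite periodic_c; auto. Qed.

Lemma tangential_vel_periodic t th : tangential_vel t (th + 2 * PI) = tangential_vel t th.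
Proof.
  unfold tangential_vel, speed.
  rewrite !pdt_periodic, !pdth_periodic; auto using cx_periodic, cy_periodic.
Qed.

Lemma RInt_dt_speed t : 0 <= t <= 1 ->
  RInt (dt_speed t) 0 (2 * PI)
  = - RInt (fun th => kappa c t th * normal_vel c t th * speed c t th) 0 (2 * PI).
Proof.
  intro Ht.
  pose proof (kappa_normal_vel_speed_continuous t) as Hcont.
  assert (Hds : forall th, continuous (dt_speed t) th)
    by (intro; apply continuity_2d_pt_continuous_snd, dt_speed_continuity; auto).
  assert (Hftc : is_RInt (fun th => dt_speed t th + kappa c t th * normal_vel c t th * speed c t th)
                   0 (2 * PI) (minus (tangential_vel t (2 * PI)) (tangential_vel t 0))).
  { apply (is_RInt_derive (V := R_CompleteNormedModule)).
    - intros; apply is_derive_tangential_vel; auto.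
    - intros; apply (continuous_plus (dt_speed t)); auto. }
  rewrite <- (Rplus_0_l (2 * PI)) in Hftc at 2.
  rewrite tangential_vel_periodic, minus_eq_zero in Hftc.
  apply (is_RInt_unique (V := R_CompleteNormedModule)) in Hftc.
  rewrite RInt_Rplus in Hftc by auto using ex_RInt_of_continuous.
  change (zero : R) with 0 in Hftc. lra.
Qed.

Definition energy_density A t th :=
  (1 + A * kappa c t th ^ 2) * normal_vel c t th ^ 2 * speed c t th.

Lemma energy_density_continuity A t th : 0 <= t <= 1 ->
  continuity_2d_pt (energy_density A) t th.
Proof.
  intro Ht. apply continuity_2d_pt_mult; [apply continuity_2d_pt_mult|].
  - apply continuity_2d_pt_plus; [apply continuity_2d_pt_const|].
    apply continuity_2d_pt_mult; [apply continuity_2d_pt_const|].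
    apply continuity_2d_pt_pow, kappa_continuity; auto.
  - apply continuity_2d_pt_pow, normal_vel_continuity; auto.
  - apply speed_continuity.
Qed.

Lemma length_pos t : 0 <= t <= 1 -> 0 < RInt (speed c t) 0 (2 * PI).
Proof.
  intro Ht. apply RInt_gt_0; [pose proof PI_RGT_0; lra | intros; apply speed_pos; auto |].
  intros; apply continuity_2d_pt_continuous_snd, speed_continuity.
Qed.

Lemma dt_length_le A t : 0 < A -> 0 <= t <= 1 ->
  RInt (dt_speed t) 0 (2 * PI) <=
  sqrt (RInt (energy_density A t) 0 (2 * PI) / A) * sqrt (RInt (speed c t) 0 (2 * PI)).
Proof.
  intros HA Ht. pose proof PI_RGT_0.
  set (f := fun th => - (kappa c t th * normal_vel c t th)).
  assert (cf : forall th, continuous f th).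
  { intro th. apply (continuity_2d_pt_continuous_snd (fun u v => - (kappa c u v * normal_vel c u v))).
    apply continuity_2d_pt_opp, kappa_normal_vel_continuity; auto. }
  assert (cs : forall th, continuous (speed c t) th)
    by (intro; apply continuity_2d_pt_continuous_snd, speed_continuity).
  assert (ce : forall th, continuous (energy_density A t) th)
    by (intro; apply continuity_2d_pt_continuous_snd, energy_density_continuity; auto).
  assert (ef2 : ex_RInt (fun x => f x ^ 2 * speed c t x) 0 (2 * PI)).
  { apply ex_RInt_of_continuous; intro.
    apply (continuous_mult (fun x => f x ^ 2)); auto using continuous_pow2. }
  assert (HI : A * RInt (fun x => f x ^ 2 * speed c t x) 0 (2 * PI)
               <= RInt (energy_density A t) 0 (2 * PI)).
  { rewrite <- RInt_Rmult_l by auto.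
    apply RInt_le; auto using ex_RInt_of_continuous; [lra | |].
    - apply (ex_RInt_scal (V := R_NormedModule)); auto.
    - intros th _. unfold f, energy_density.
      pose proof (speed_nonneg t th). pose proof (pow2_ge_0 (normal_vel c t th)).
      assert (0 <= normal_vel c t th ^ 2 * speed c t th) by (apply Rmult_le_pos; auto).
      nra. }
  rewrite RInt_dt_speed by auto.
  replace (- RInt _ 0 (2 * PI)) with (RInt (fun th => f th * speed c t th) 0 (2 * PI)).
  2: { rewrite (RInt_ext _ (fun th => -1 * (kappa c t th * normal_vel c t th * speed c t th)))
         by (intros; unfold f; simpl; ring).
       rewrite RInt_Rmult_l; [simpl; ring|].
       apply ex_RInt_of_continuous; intro; apply kappa_normal_vel_speed_continuous; auto. }
  eapply Rle_trans; [apply RInt_weighted_Cauchy_Schwarz; auto using speed_nonneg; lra|].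
  rewrite sqrt_mult_alt by (apply RInt_ge_0; auto; [lra|]; intros; apply Rmult_le_pos;
                               auto using pow2_ge_0, speed_nonneg).
  apply Rmult_le_compat_r; [apply sqrt_pos|].
  apply sqrt_le_1_alt, Rmult_le_reg_l with A; auto.
  assert (E : forall J, A * (J / A) = J) by (intro; field; lra).
  rewrite E; exact HI.
Qed.

Lemma sqrt_ell_sub_le_Lhor A : 0 < A ->
  sqrt (ell (c 1)) - sqrt (ell (c 0)) <= / (2 * sqrt A) * Lhor A c.
Proof.
  intro HA. pose proof PI_RGT_0. pose proof (sqrt_lt_R0 A HA).
  (* clamping t extends the integrand of Lhor continuously beyond [0, 1] *)
  set (h := fun t => sqrt (RInt (energy_density A (clamp01 t)) 0 (2 * PI))).
  assert (ch : forall t, continuous h t).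
  { intro t. apply continuous_sqrt_comp.
    apply (continuous_RInt_param (fun u => energy_density A (clamp01 u))); [lra|].
    intros; apply continuity_2d_pt_clamp01; intros; apply energy_density_continuity; auto. }
  replace (/ (2 * sqrt A) * Lhor A c) with (RInt (fun t => / (2 * sqrt A) * h t) 0 1).
  2: { rewrite RInt_Rmult_l by (apply ex_RInt_of_continuous; auto).
       unfold Lhor; apply f_equal, RInt_ext; intros t Ht.
       rewrite Rmin_left, Rmax_right in Ht by lra. unfold h; rewrite clamp01_id by lra.
       reflexivity. }
  change (ell (c ?t)) with (RInt (speed c t) 0 (2 * PI)).
  apply (sub_le_RInt_of_derive_le (fun t => sqrt (RInt (speed c t) 0 (2 * PI)))
           (fun t => RInt (dt_speed t) 0 (2 * PI) / (2 * sqrt (RInt (speed c t) 0 (2 * PI))))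
           (fun t => / (2 * sqrt A) * h t)).
  - lra.
  - intros t Ht. apply (is_derive_sqrt (fun u => RInt (speed c u) 0 (2 * PI))).
    + apply is_derive_length; lra.
    + apply length_pos; lra.
  - intros t _. apply continuous_sqrt_comp, continuous_RInt_param; [lra|].
    intros; apply speed_continuity.
  - intro t. apply (continuous_scal_r _ h); auto.
  - intros t Ht. unfold h; rewrite clamp01_id by auto.
    pose proof (dt_length_le A t HA Ht) as Hle.
    pose proof (sqrt_lt_R0 _ (length_pos t Ht)).
    rewrite sqrt_div_alt in Hle by lra.
    set (D := RInt (dt_speed t) 0 (2 * PI)) in *.
    set (J := sqrt (RInt (energy_density A t) 0 (2 * PI))) in *.
    set (L := sqrt (RInt (speed c t) 0 (2 * PI))) in *.
    apply Rle_trans with (J / sqrt A * L / (2 * L)).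
    + apply Rmult_le_compat_r; [apply Rlt_le, Rinv_0_lt_compat; lra | exact Hle].
    + right; field; lra.
Qed.

End HorizontalPath.



Definition curve_speed (g : R -> R * R) th :=
  sqrt (Derive (fun s => fst (g s)) th ^ 2 + Derive (fun s => snd (g s)) th ^ 2).

Lemma curve_speed_continuous g th : is_imm g -> continuous (curve_speed g) th.
Proof.
  intros (hx & hy & _). apply continuous_sqrt_comp.
  apply (continuous_plus (fun u => Derive (fun s => fst (g s)) u ^ 2));
    apply continuous_pow2, smooth1_continuous_Derive; auto.
Qed.

Lemma curve_speed_periodic g th : is_imm g -> curve_speed g (th + 2 * PI) = curve_speed g th.
Proof.
  intros (hx & hy & hp & _). unfold curve_speed.
  rewrite (Derive_periodic (fun s => fst (g s))), (Derive_periodic (fun s => snd (g s)));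
    auto using smooth1_ex_derive; intro; rewrite hp; auto.
Qed.

Lemma ell_same_orbit c0 g : is_imm c0 -> same_orbit c0 g -> ell g = ell c0.
Proof.
  intros hc [phi [[sphi [hper hd]] hg]]. pose proof hc as (hx & hy & _).
  change (ell c0) with (RInt (curve_speed c0) 0 (2 * PI)).
  rewrite <- (RInt_abs_Derive_comp_periodic (curve_speed c0) phi (2 * PI)); auto.
  2: pose proof PI_RGT_0; lra.
  2, 3: intro; auto using curve_speed_continuous, curve_speed_periodic.
  2, 3: intro; auto using smooth1_ex_derive, smooth1_continuous_Derive.
  unfold ell. apply RInt_ext; intros th _.
  rewrite (Derive_ext (fun s => fst (g s)) (fun s => fst (c0 (phi s)))) by (intro; rewrite hg; auto).
  rewrite (Derive_ext (fun s => snd (g s)) (fun s => snd (c0 (phi s)))) by (intro; rewrite hg; auto).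
  rewrite (Derive_comp (fun s => fst (c0 s)) phi), (Derive_comp (fun s => snd (c0 s)) phi)
    by auto using smooth1_ex_derive.
  unfold curve_speed. rewrite <- sqrt_Rsqr_abs, <- sqrt_mult_alt by apply Rle_0_sqr.
  f_equal. unfold Rsqr. ring.
Qed.

Theorem proposition3p3 (A : R) (hA : 0 < A) (c0 c1 : R -> R * R)
  (h0 : is_imm c0) (h1 : is_imm c1) :
  Rbar_le (Finite (sqrt (ell c1) - sqrt (ell c0)))
          (Rbar_mult (Finite (/ (2 * sqrt A))) (distBi A c0 c1)).
Proof.
  apply Rbar_le_mult_Glb_Rbar.
  - apply Rinv_0_lt_compat. pose proof (sqrt_lt_R0 A hA). lra.
  - intros L (c & (hX & hY & hper & hreg) & o0 & o1 & ->).
    rewrite <- (ell_same_orbit c0 (c 0)), <- (ell_same_orbit c1 (c 1)) by auto.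
    apply sqrt_ell_sub_le_Lhor; auto.
Qed.
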